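(* Let $X$ be a set, $T:X\to X$ a map, and $G$ a finite group acting on $X$ such that $g\circ T=T\circ g$ for all $g\in G$. Let $H\leqslant G$ and let $x\in X_{[H]}$ be a periodic point of $T$. Then there exists $k\in\Delta(N_G(H)/H)$ such that (i) $\mathfrak{O}_T(x)$ shortens in length by a factor of $\frac1k$, and (ii) $\mathfrak{O}_T(x)$ glues to $\frac{[G:H]}{k}$ orbits (including itself).
   Context: For $x\in X$, $\mathfrak{O}_T(x)=\{T^j(x):j\geqslant0\}$ and $\mathfrak{O}_G(x)=\{g(x):g\in G\}$. $G_x=\{g\in G:g(x)=x\}$ is the stabilizer of $x$; $N_G(H)=\{g\in G: gHg^{-1}=H\}$ is the normalizer; $[H]=\{gHg^{-1}:g\in G\}$ is the conjugacy class of $H$; $X_{[H]}=\{x\in X: G_x\in[H]\}$. For a finite group $K$, $\Delta(K)=\{|\langle h\rangle|: h\in K\}$ is the set of orders of elements of $K$. Let $X'=G\backslash X$, $\pi(x)=\mathfrak{O}_G(x)$, and $T'(\mathfrak{O}_G(x))=\mathfrak{O}_G(T(x))$ the induced map. ''$\mathfrak{O}_T(x)$ shortens in length by a factor of $\frac1k$'' means $|\mathfrak{O}_{T'}(\pi(x))|=\frac1k|\mathfrak{O}_T(x)|$. ''$\mathfrak{O}_T(x)$ glues to $m$ orbits (including itself)'' means there are exactly $m$ distinct closed $T$-orbits $\mathfrak{O}_T(y)$ with $\pi(\mathfrak{O}_T(y))=\pi(\mathfrak{O}_T(x))$. *)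

From HB Require Import structures.
From mathcomp Require Import all_boot all_fingroup.
From mathcomp Require Import boolp.
Set Implicit Arguments. Unset Strict Implicit. Unset Printing Implicit Defensive.

(* Sets over an arbitrary type X are predicates X -> Prop; two sets are equal
   when equal as functions (extensional, via funext/propext). *)
Section Defs.
Variable X : Type.

Definition card_is (Y : Type) (A : Y -> Prop) (n : nat) : Prop :=
  exists f : 'I_n -> Y, injective f /\ (forall y, A y <-> exists i, f i = y).

Definition orbitT (T : X -> X) (x : X) : X -> Prop :=
  fun y => exists j : nat, y = iter j T x.

Definition periodic (T : X -> X) (x : X) : Prop :=
  exists n, 0 < n /\ iter n T x = x.

Variable gT : finGroupType.

Definition is_left_action (G : {set gT}) (act : gT -> X -> X) : Prop :=
  (forall x, act 1%g x = x) /\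
  (forall g h x, g \in G -> h \in G -> act g (act h x) = act (g * h)%g x).

(* G-orbit O_G(x) = pi(x), a point of X' = G\X *)
Definition orbitG (G : {set gT}) (act : gT -> X -> X) (x : X) : X -> Prop :=
  fun y => exists2 g, g \in G & y = act g x.

Definition stab (G : {set gT}) (act : gT -> X -> X) (x : X) : {set gT} :=
  [set g in G | `[< act g x = x >]].

Definition in_XH (G H : {set gT}) (act : gT -> X -> X) (x : X) : Prop :=
  exists2 g, g \in G & stab G act x = (H :^ g)%g.

(* orbit of pi(x) under the induced map T' : O_{T'}(pi x) = {pi(T^j x)} *)
Definition orbitT' (G : {set gT}) (act : gT -> X -> X) (T : X -> X) (x : X)
  : (X -> Prop) -> Prop :=
  fun S => exists j : nat, S = orbitG G act (iter j T x).

Definition piset (G : {set gT}) (act : gT -> X -> X) (A : X -> Prop)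
  : (X -> Prop) -> Prop :=
  fun S => exists2 y, A y & S = orbitG G act y.

Definition glued (G : {set gT}) (act : gT -> X -> X) (T : X -> X) (x : X)
  : (X -> Prop) -> Prop :=
  fun O => exists y, periodic T y /\ O = orbitT T y /\
     piset G act (orbitT T y) = piset G act (orbitT T x).

End Defs.

From HB Require Import structures.
From mathcomp Require Import all_boot all_fingroup.
From mathcomp Require Import cyclic boolp zify.

(* Since G commutes with T, "lying in the same G-orbit" is a T-invariant
   equivalence, so T^j x = x exactly when n | j (n the period of x) and T^j x
   lies in the G-orbit of x exactly when n' | j, with n' | n. Write
   T^n' x = a x with a in G; then a normalises the stabiliser S = G_x, and
   a^j x = T^(j n') x shows that aS has order k = n/n' in N_G(S)/S, which
   conjugation carries to N_G(H)/H. The T-orbits glued to O_T(x) are the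
   O_T(b x), b in G, and O_T(b x) = O_T(c x) iff b^-1 c lies in K = <a>S,
   whose index in G is [G:S]/k = [G:H]/k. *)

Set Implicit Arguments.
Unset Strict Implicit.
Unset Printing Implicit Defensive.

Lemma eq_card_is (Y : Type) (A B : Y -> Prop) n :
  (forall y, A y <-> B y) -> card_is B n -> card_is A n.
Proof.
move=> AB [f [f_inj f_onto]]; exists f; split=> // y.
by split=> [/AB/f_onto | /f_onto/AB].
Qed.

Lemma card_is_mod_seq (Y : Type) (f : nat -> Y) n : 0 < n ->
  (forall i j, f i = f j <-> i = j %[mod n]) ->
  card_is (fun y => exists j, y = f j) n.
Proof.
move=> n_gt0 f_mod; exists (fun i : 'I_n => f i); split.
  by move=> i j /f_mod; rewrite !modn_small // => /val_inj.
move=> y; split=> [[j ->] | [i <-]]; last by exists i.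
by exists (Ordinal (ltn_pmod j n_gt0)); apply/f_mod; rewrite /= modn_mod.
Qed.

Lemma card_is_lcoset_image (gT : finGroupType) (G K : {group gT})
    (Y : Type) (F : gT -> Y) :
  K \subset G -> {in G &, forall b c, F b = F c <-> (b^-1 * c)%g \in K} ->
  card_is (fun y => exists2 b, b \in G & y = F b) #|G : K|%g.
Proof.
move=> sKG F_K; rewrite -card_lcosets.
have reprP C : C \in lcosets K G -> repr C \in G /\ C = (repr C *: K)%g.
  case/lcosetsP=> b bG ->.
  have bK_repr : repr (b *: K)%g \in (b *: K)%g := mem_repr _ (lcoset_refl K b).
  split; last exact/esym/lcoset_eqP.
  by move: bK_repr; rewrite mem_lcoset => /(subsetP sKG)/(groupM bG); rewrite mulKVg.
exists (fun i => F (repr (enum_val i))); split.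
  move=> i i' /F_K; have [rG Ei] := reprP _ (enum_valP i).
  have [r'G Ei'] := reprP _ (enum_valP i').
  move=> /(_ rG r'G); rewrite -mem_lcoset => /lcoset_eqP.
  by rewrite -Ei -Ei' => /esym/enum_val_inj.
move=> y; split=> [[b bG ->] | [i <-]]; last first.
  by exists (repr (enum_val i)); have [] := reprP _ (enum_valP i).
have bK : (b *: K)%g \in lcosets K G by apply/lcosetsP; exists b.
exists (enum_rank_in bK (b *: K)%g); rewrite enum_rankK_in //.
have [rG Kb] := reprP _ bK; apply/F_K => //.
by rewrite -mem_lcoset -Kb lcoset_refl.
Qed.

Lemma dvdn_ext m1 m2 : (forall j, (m1 %| j) = (m2 %| j)) -> m1 = m2.
Proof.
by move=> eq_dvd; apply/eqP; rewrite eqn_dvd eq_dvd dvdnn -eq_dvd dvdnn.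
Qed.

Lemma order_coset_dvdn (gT : finGroupType) (H : {group gT}) y j :
  y \in 'N(H)%g -> (#[coset H y]%g %| j) = (y ^+ j \in H)%g.
Proof.
move=> yN; rewrite order_dvdn -morphX //.
by apply/eqP/idP => [/coset_idr | /coset_id] //; apply; rewrite groupX.
Qed.

Lemma order_coset_conj (gT : finGroupType) (H : {group gT}) g y :
  y \in 'N(H :^ g)%g -> #[coset (H :^ g) y]%g = #[coset H (y ^ g^-1)]%g.
Proof.
move=> yN; have yN' : (y ^ g^-1)%g \in 'N(H)%g by rewrite -mem_conjg -normJ.
apply: dvdn_ext => j.
by rewrite !order_coset_dvdn // mem_conjg conjXg.
Qed.

Lemma iter_period (Y : Type) (T : Y -> Y) y p m :
  iter p T y = y -> iter (m * p) T y = y.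
Proof. by move=> per_p; elim: m => [//|m IHm]; rewrite mulSn iterD IHm per_p. Qed.

Lemma orbitT_iter (Y : Type) (T : Y -> Y) y j :
  periodic T y -> orbitT T (iter j T y) = orbitT T y.
Proof.
case=> p [p_gt0 per_p]; apply: funext => z; apply: propext.
split=> [[i ->] | [i ->]]; first by exists (i + j); rewrite iterD.
exists (i + j * p.-1).
by rewrite -iterD -addnA -mulnSr prednK // iterD iter_period.
Qed.

Section ReturnPeriod.

Variables (Y Z : Type) (T : Y -> Y) (f : Y -> Z).
Hypothesis f_T : forall y z, f y = f z -> f (T y) = f (T z).

Lemma f_iter j y z : f y = f z -> f (iter j T y) = f (iter j T z).
Proof. by move=> fyz; elim: j => //= j; apply: f_T. Qed.

Lemma exists_return_period x : periodic T x ->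
  exists2 n, 0 < n &
    forall i j, f (iter i T x) = f (iter j T x) <-> i = j %[mod n].
Proof.
case=> p [p_gt0 per_p].
have has_return : exists j, `[< 0 < j /\ f (iter j T x) = f x >].
  by exists p; apply/asboolP; rewrite per_p.
case: (ex_minnP has_return) => n /asboolP [n_gt0 ret_n] n_min.
exists n => // i j.
have ret_mul m : f (iter (m * n) T x) = f x.
  by elim: m => [|m IHm]; rewrite ?mulSn ?iterD // (f_iter n IHm).
have ret_mod k : f (iter k T x) = f (iter (k %% n) T x).
  by rewrite {1}(divn_eq k n) addnC iterD; apply: f_iter.
split=> [f_ij | ij_mod]; last by rewrite ret_mod ij_mod -ret_mod.
have no_return k l : k < l < n -> f (iter k T x) <> f (iter l T x).
  case/andP=> lt_kl lt_ln f_kl.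
  have le_np : n <= p by apply: n_min; apply/asboolP; rewrite per_p.
  suff : n <= l - k by lia.
  apply: n_min; apply/asboolP; split; first by rewrite subn_gt0.
  have := f_iter (p - k) f_kl; rewrite -!iterD subnK ?per_p; last by lia.
  by rewrite (_ : p - k + l = l - k + p) ?iterD ?per_p; last by lia.
rewrite ret_mod [f (iter j T x)]ret_mod in f_ij.
have [lt_ij | lt_ji | //] := ltngtP (i %% n) (j %% n); exfalso.
  by apply: (no_return _ _ _ f_ij); rewrite lt_ij ltn_pmod.
by apply: (no_return _ _ _ (esym f_ij)); rewrite lt_ji ltn_pmod.
Qed.

End ReturnPeriod.

Section Action.

Variables (X : Type) (T : X -> X) (gT : finGroupType) (G : {group gT}).
Variable act : gT -> X -> X.
Hypothesis act_left : is_left_action G act.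
Hypothesis act_T : forall g y, g \in G -> act g (T y) = T (act g y).

Lemma act1 y : act 1%g y = y.
Proof. by case: act_left. Qed.

Lemma actM g h y : g \in G -> h \in G -> act g (act h y) = act (g * h)%g y.
Proof. by case: act_left => _; apply. Qed.

Lemma actKV b y : b \in G -> act b^-1 (act b y) = y.
Proof. by move=> bG; rewrite actM ?groupV // mulVg act1. Qed.

Lemma iter_act j b y : b \in G -> iter j T (act b y) = act b (iter j T y).
Proof. by move=> bG; elim: j => [//|j IHj]; rewrite !iterS IHj act_T. Qed.

Lemma periodic_act b y : b \in G -> periodic T y -> periodic T (act b y).
Proof. by move=> bG [p [p_gt0 per_p]]; exists p; rewrite iter_act // per_p. Qed.

Lemma orbitG_act b y : b \in G -> orbitG G act (act b y) = orbitG G act y.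
Proof.
move=> bG; apply: funext => z; apply: propext.
split=> [[c cG ->] | [c cG ->]].
  by exists (c * b)%g; rewrite ?groupM // actM.
by exists (c * b^-1)%g; rewrite ?groupM ?groupV // -actM ?groupV // actKV.
Qed.

Lemma eq_orbitG y z : orbitG G act y = orbitG G act z <-> orbitG G act z y.
Proof.
split=> [<- | [b bG ->]]; last exact: orbitG_act.
by exists 1%g; rewrite ?act1.
Qed.

Lemma orbitG_T y z : orbitG G act y = orbitG G act z ->
  orbitG G act (T y) = orbitG G act (T z).
Proof. by move/eq_orbitG=> [b bG ->]; rewrite -act_T // orbitG_act. Qed.

Lemma piset_orbitT_act b y : b \in G ->
  piset G act (orbitT T (act b y)) = piset G act (orbitT T y).
Proof.
move=> bG; apply: funext => Z; apply: propext.
split=> [[z [j ->] ->] | [z [j ->] ->]].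
  by exists (iter j T y); [exists j | rewrite iter_act ?orbitG_act].
by exists (iter j T (act b y)); [exists j | rewrite iter_act ?orbitG_act].
Qed.

Lemma glued_act x : periodic T x -> forall O,
  glued G act T x O <-> exists2 b, b \in G & O = orbitT T (act b x).
Proof.
move=> x_per O; split=> [[y [y_per [-> pi_y]]] | [b bG ->]].
  have : piset G act (orbitT T y) (orbitG G act y) by exists y => //; exists 0.
  rewrite pi_y => -[z [j ->] /eq_orbitG [b bG ->]].
  by exists b => //; rewrite -iter_act // orbitT_iter //; apply: periodic_act.
exists (act b x); split; first exact: periodic_act bG x_per.
by rewrite piset_orbitT_act.
Qed.

Section ReturnToOrbit.

Variables (S : {group gT}) (x : X).
Hypothesis stab_x : stab G act x = S.
Variables (n n' : nat) (a : gT).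
Hypotheses (n_gt0 : 0 < n) (n'_gt0 : 0 < n').
Hypothesis fixed_iff : forall j, iter j T x = x <-> n %| j.
Hypothesis orbit_iff : forall j, orbitG G act x (iter j T x) <-> n' %| j.
Hypotheses (aG : a \in G) (return_a : iter n' T x = act a x).

Local Notation K := (<[a]> <*> S)%G.

Lemma stab_sub : S \subset G.
Proof. by apply/subsetP => b; rewrite -stab_x inE => /andP[]. Qed.

Lemma mem_stab b : b \in G -> (b \in S) <-> act b x = x.
Proof. by move=> bG; rewrite -stab_x inE bG; split=> /asboolP. Qed.

Lemma iter_return i : iter (i * n') T x = act (a ^+ i) x.
Proof.
elim: i => [|i IHi]; first by rewrite mul0n expg0 act1.
by rewrite mulSn iterD IHi iter_act ?groupX // return_a actM ?groupX // -expgSr.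
Qed.

Lemma return_dvdn_period : n' %| n.
Proof. by apply/orbit_iff; exists 1%g; rewrite ?act1 //; apply/fixed_iff. Qed.

Lemma norm_stab_return : a \in 'N(S)%g.
Proof.
rewrite inE sub_conjg; apply/subsetP => s sS; rewrite mem_conjgV.
have sG := subsetP stab_sub s sS.
apply/mem_stab; first by rewrite groupJ.
rewrite conjgE -!actM ?groupV ?groupM // -return_a -iter_act //.
by move/mem_stab: sS => ->; rewrite // return_a actKV.
Qed.

Lemma expg_return_stab j : (a ^+ j \in S)%g = (n %/ n' %| j).
Proof.
have dvd_n : (n %| j * n') = (n %/ n' %| j).
  by rewrite -{1}(divnK return_dvdn_period) dvdn_pmul2r.
have stab_aj := mem_stab (groupX j aG); rewrite -iter_return in stab_aj.
apply/idP/idP => [/stab_aj/fixed_iff | n_j]; first by rewrite dvd_n.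
by apply/stab_aj/fixed_iff; rewrite dvd_n.
Qed.

Lemma order_coset_return : #[coset S a]%g = n %/ n'.
Proof.
apply: dvdn_ext => j.
by rewrite order_coset_dvdn ?norm_stab_return ?expg_return_stab.
Qed.

Lemma mem_returns b : b \in G ->
  b \in K <-> exists j, act b x = iter j T x.
Proof.
move=> bG; rewrite /= norm_joinEl ?cycle_subG ?norm_stab_return //.
split=> [/mulsgP [_ s /cycleP [i ->] sS ->] | [j ret_j]].
  have sG := subsetP stab_sub s sS.
  exists (i * n'); rewrite iter_return -actM ?groupX //.
  by move/(mem_stab sG): sS => ->.
have /dvdnP [q j_q] : n' %| j by apply/orbit_iff; exists b.
rewrite j_q iter_return in ret_j.
have aqG : (a ^+ q \in G)%g := groupX q aG.
rewrite -(mulKVg (a ^+ q)%g b) mem_mulg ?mem_cycle //.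
by apply/mem_stab; rewrite ?groupM ?groupV // -actM ?groupV // ret_j actKV.
Qed.

Lemma index_stab_returns : #|G : K|%g * (n %/ n') = #|G : S|%g.
Proof.
have nSK : K \subset 'N(S)%g.
  by rewrite join_subG cycle_subG norm_stab_return normG.
rewrite -order_coset_return orderE -quotient_cycle ?norm_stab_return //.
rewrite -quotientYidr ?cycle_subG ?norm_stab_return // card_quotient //.
by rewrite Lagrange_index ?joing_subr // join_subG cycle_subG aG stab_sub.
Qed.

Lemma periodic_x : periodic T x.
Proof. by exists n; split=> //; apply/fixed_iff. Qed.

Lemma eq_orbitT_act b c : b \in G -> c \in G ->
  orbitT T (act b x) = orbitT T (act c x) <-> (b^-1 * c)%g \in K.
Proof.
move=> bG cG; rewrite mem_returns ?groupM ?groupV //.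
split=> [eq_bc | [j ret_j]].
  have : orbitT T (act c x) (act c x) by exists 0.
  rewrite -eq_bc => -[j ret_j]; exists j.
  by rewrite -actM ?groupV // ret_j iter_act // actKV.
have -> : act c x = iter j T (act b x).
  by rewrite iter_act // -ret_j actM ?groupM ?groupV // mulKVg.
by rewrite orbitT_iter //; apply: periodic_act periodic_x.
Qed.

Lemma card_glued : card_is (glued G act T x) #|G : K|%g.
Proof.
apply: eq_card_is (glued_act periodic_x) _.
apply: card_is_lcoset_image => [|b c bG cG]; last exact: eq_orbitT_act.
by rewrite join_subG cycle_subG aG stab_sub.
Qed.

Lemma stab_return_spec :
  [/\ a \in 'N(S)%g, #[coset S a]%g = n %/ n', n' %| n,
      card_is (glued G act T x) #|G : K|%g
    & #|G : K|%g * (n %/ n') = #|G : S|%g].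
Proof.
split; [exact: norm_stab_return | exact: order_coset_return |
        exact: return_dvdn_period | exact: card_glued | exact: index_stab_returns].
Qed.

End ReturnToOrbit.

End Action.

Theorem lemma6 (X : Type) (T : X -> X) (gT : finGroupType) (G H : {group gT})
  (act : gT -> X -> X) :
  is_left_action G act ->
  (forall g y, g \in G -> act g (T y) = T (act g y)) ->
  H \subset G ->
  forall x : X, in_XH G H act x -> periodic T x ->
  exists k : nat,
    (exists2 h, h \in ('N_G(H) / H)%g & k = #[h]%g) /\
    (exists n n' : nat,
        card_is (orbitT T x) n /\ card_is (orbitT' G act T x) n' /\ n' * k = n) /\
    (exists m : nat, card_is (glued G act T x) m /\ m * k = #|G : H|%g).
Proof.
move=> act_left act_T _ x [g gG stab_x] x_per.
have [n n_gt0 period_n] := exists_return_period (f := id) (congr1 T) x_per.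
have [n' n'_gt0 class_n'] := exists_return_period (orbitG_T act_left act_T) x_per.
have mod0_dvdn m j : j = 0 %[mod m] <-> m %| j by rewrite mod0n /dvdn; split=> /eqP.
have fixed_iff j : iter j T x = x <-> n %| j.
  exact: iff_trans (period_n j 0) (mod0_dvdn n j).
have orbit_iff j : orbitG G act x (iter j T x) <-> n' %| j.
  exact: iff_trans (iff_sym (eq_orbitG act_left _ _))
    (iff_trans (class_n' j 0) (mod0_dvdn n' j)).
have [a aG return_a] : exists2 a, a \in G & iter n' T x = act a x.
  exact: (orbit_iff n').2 (dvdnn n').
have [aN order_a n'_dvd_n card_glued_a index_a] := stab_return_spec act_left
  act_T stab_x n_gt0 n'_gt0 fixed_iff orbit_iff aG return_a.
exists (n %/ n'); split; [|split].
- exists (coset H (a ^ g^-1)); last by rewrite -order_coset_conj.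
  by rewrite mem_quotient // inE groupJ ?groupV //= -mem_conjg -normJ.
- exists n, n'; split; [exact: card_is_mod_seq period_n | split].
    exact: card_is_mod_seq class_n'.
  by rewrite mulnC divnK.
- exists #|G : (<[a]> <*> (H :^ g)%G)%G|%g; split=> //.
  by rewrite index_a -(indexJg G H g) conjGid.
Qed.
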